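(* Let $r\ge2$, $d\in\{1,\dots,r-1\}$ and let $M\in\mathrm{rep}_{\mathrm{proj}}(K_r,d)$ with $\Delta_M(d)>d(r-d)$. Then there exist $a\in\mathbb N$ (a positive integer) and an exact sequence $(0)\to aP_0(r)\to M\to M_{\min}\to(0)$ in $\mathrm{rep}(K_r)$, where $M_{\min}\in\mathrm{rep}_{\mathrm{proj}}(K_r,d)$ and $\Delta_{M_{\min}}(d)=d(r-d)$.
   Context: $k$ algebraically closed of arbitrary characteristic; vector spaces finite-dimensional. $K_r$: Kronecker quiver with arrows $\gamma_1,\dots,\gamma_r:1\to2$; $A_r=\bigoplus_ik\gamma_i$; for $M=(M_1,M_2,(M(\gamma_i))_i)$, $\psi_M:A_r\otimes_kM_1\to M_2$, $\gamma_i\otimes m\mapsto M(\gamma_i)(m)$; $\Delta_M(d)=\dim_kM_2-d\dim_kM_1$. $\mathrm{rep}_{\mathrm{proj}}(K_r,d)$ is the full subcategory of $M$ with $\psi_M|_{\mathfrak v\otimes M_1}$ injective for every $d$-dimensional subspace $\mathfrak v\subseteq A_r$. $P_0(r)=(0,k)$ is the simple projective representation. *)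

From HB Require Import structures.
From mathcomp Require Import all_boot all_order all_algebra.
Set Implicit Arguments. Unset Strict Implicit. Unset Printing Implicit Defensive.
Import Order.TTheory GRing.Theory Num.Theory.
Local Open Scope ring_scope.

(* Finite-dimensional representations of the Kronecker quiver K_r over k:
   M_1 = k^dim1, M_2 = k^dim2, and the arrow gamma_i acts as the linear map
   k^dim1 -> k^dim2, v |-> v *m arr i (row-vector convention). *)
Record krep (k : fieldType) (r : nat) := KRep {
  dim1 : nat;
  dim2 : nat;
  arr : 'I_r -> 'M[k]_(dim1, dim2) }.

Definition Delta (k : fieldType) (r : nat) (M : krep k r) (d : nat) : int :=
  (dim2 M)%:Z - (d * dim1 M)%:Z.

(* psi_M on v (x) m, for v = sum_j v_j gamma_j in A_r = k^r. *)
Definition psi_elem (k : fieldType) (r : nat) (M : krep k r)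
    (v : 'rV[k]_r) (m : 'rV[k]_(dim1 M)) : 'rV[k]_(dim2 M) :=
  \sum_(j < r) v 0 j *: (m *m arr M j).

(* rep_proj(K_r, d): for every d-dimensional subspace v of A_r (given by a
   basis, the rows of a row-free d x r matrix V), psi_M restricted to
   v (x) M_1 is injective.  Every element of v (x) M_1 is uniquely
   sum_l (row l V) (x) x_l, so injectivity reads as below. *)
Definition rep_proj (k : fieldType) (r d : nat) (M : krep k r) : Prop :=
  forall V : 'M[k]_(d, r), row_free V ->
  forall x : 'I_d -> 'rV[k]_(dim1 M),
    \sum_(l < d) @psi_elem k r M (row l V) (x l) = 0 -> forall l, x l = 0.

Definition is_hom (k : fieldType) (r : nat) (M N : krep k r)
    (f1 : 'M[k]_(dim1 M, dim1 N)) (f2 : 'M[k]_(dim2 M, dim2 N)) : Prop :=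
  forall i, arr M i *m f2 = f1 *m arr N i.

Definition short_exact (k : fieldType) (p q s : nat)
    (f : 'M[k]_(p, q)) (g : 'M[k]_(q, s)) : Prop :=
  [/\ row_free f, row_full g & (f == kermx g)%MS].

Definition aP0 (k : fieldType) (r a : nat) : krep k r :=
  @KRep k r 0 a (fun _ => 0).

Definition ses (k : fieldType) (r : nat) (L M N : krep k r) : Prop :=
  exists (f1 : 'M[k]_(dim1 L, dim1 M)) (f2 : 'M[k]_(dim2 L, dim2 M))
         (g1 : 'M[k]_(dim1 M, dim1 N)) (g2 : 'M[k]_(dim2 M, dim2 N)),
    [/\ is_hom f1 f2, is_hom g1 g2, short_exact f1 g1 & short_exact f2 g2].

(* The union over all d-dimensional v <= A_r of the images psi_M(v (x) M_1)
   is covered by finitely many polynomial maps (affine charts of the r x m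
   matrices of rank <= d) from k^(d(r-d) + d m), m = dim M_1.  When
   dim M_2 > d(r-d) + d m such maps miss a vector u: counting monomials gives
   a nonzero polynomial vanishing on all their images, and a Kronecker
   substitution turns it into a nonzero univariate polynomial, which has a
   non-root since k is infinite.  Dividing M_2 by <u> keeps psi injective on
   every v (x) M_1 and lowers Delta_M(d) by one; iterating until
   Delta = d(r-d) exhibits M_min as the quotient of M by a P_0(r). *)

From HB Require Import structures.
From mathcomp Require Import all_boot all_order all_algebra zify.
Set Implicit Arguments. Unset Strict Implicit. Unset Printing Implicit Defensive.
Import Order.TTheory GRing.Theory Num.Theory.
Local Open Scope ring_scope.

Section PolyFun.
Variables (R : comPzRingType) (X : finType).

Definition monomial E (b : {ffun X -> 'I_E}) (z : X -> R) : R := \prod_x z x ^+ b x.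

Definition polyfun E (f : (X -> R) -> R) :=
  exists a : {ffun X -> 'I_E} -> R, forall z, f z = \sum_b a b * monomial b z.

Lemma eq_polyfun E f g : (forall z, f z = g z) -> polyfun E f -> polyfun E g.
Proof. by move=> fg [a ha]; exists a => z; rewrite -fg ha. Qed.

Lemma polyfun0 E : polyfun E (fun _ => 0).
Proof. by exists (fun _ => 0) => z; rewrite big1 // => b _; rewrite mul0r. Qed.

Lemma polyfunD E f g :
  polyfun E f -> polyfun E g -> polyfun E (fun z => f z + g z).
Proof.
move=> [a ha] [b hb]; exists (fun x => a x + b x) => z.
by rewrite ha hb -big_split; apply: eq_bigr => i _; rewrite mulrDl.
Qed.

Lemma polyfunMl E c f : polyfun E f -> polyfun E (fun z => c * f z).
Proof.
move=> [a ha]; exists (fun x => c * a x) => z.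
by rewrite ha mulr_sumr; apply: eq_bigr => i _; rewrite mulrA.
Qed.

Lemma polyfun_sum E (I : Type) (s : seq I) (F : I -> (X -> R) -> R) :
  (forall i, polyfun E (F i)) -> polyfun E (fun z => \sum_(i <- s) F i z).
Proof.
move=> hF; elim: s => [|i s IH].
  by apply: eq_polyfun (polyfun0 E) => z; rewrite big_nil.
by apply: eq_polyfun (polyfunD (hF i) IH) => z; rewrite big_cons.
Qed.

Lemma polyfun_monomial E (b : {ffun X -> 'I_E}) : polyfun E (monomial b).
Proof.
exists (fun c => (c == b)%:R) => z.
by rewrite (bigD1 b) //= eqxx mul1r big1 ?addr0 // => c /negPf ->; rewrite mul0r.
Qed.

Lemma polyfun_widen E E' f : (E <= E')%N -> polyfun E f -> polyfun E' f.
Proof.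
move=> le [a ha].
have hm (b : {ffun X -> 'I_E}) : polyfun E' (monomial b).
  apply: eq_polyfun (polyfun_monomial [ffun x => widen_ord le (b x)]) => z.
  by apply: eq_bigr => x _; rewrite ffunE.
apply: eq_polyfun (polyfun_sum (index_enum _) (fun b => polyfunMl (a b) (hm b))).
by move=> z; rewrite ha.
Qed.

Lemma polyfunM E1 E2 f g :
  polyfun E1 f -> polyfun E2 g -> polyfun (E1 + E2) (fun z => f z * g z).
Proof.
move=> [a ha] [b hb].
have hm (c1 : {ffun X -> 'I_E1}) (c2 : {ffun X -> 'I_E2}) :
    polyfun (E1 + E2) (fun z => monomial c1 z * monomial c2 z).
  have lt_add x : (c1 x + c2 x < E1 + E2)%N.
    by have := ltn_ord (c1 x); have := ltn_ord (c2 x); lia.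
  apply: eq_polyfun (polyfun_monomial [ffun x => Ordinal (lt_add x)]) => z.
  by rewrite /monomial -big_split; apply: eq_bigr => x _; rewrite ffunE exprD.
apply: eq_polyfun (polyfun_sum (index_enum _) (fun c1 => polyfun_sum
   (index_enum _) (fun c2 => polyfunMl (a c1 * b c2) (hm c1 c2)))) => z.
rewrite ha hb mulr_suml; apply: eq_bigr => c1 _; rewrite mulr_sumr.
by apply: eq_bigr => c2 _; rewrite mulrACA.
Qed.

Lemma polyfun1 : polyfun 1 (fun _ => 1).
Proof.
apply: eq_polyfun (polyfun_monomial [ffun _ => ord0]) => z.
by rewrite /monomial big1 // => x _; rewrite ffunE expr0.
Qed.

Lemma polyfun_var x : polyfun 2 (fun z => z x).
Proof.
apply: eq_polyfun (polyfun_monomial [ffun y => (y == x)%:R]) => z.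
rewrite /monomial (bigD1 x) //= ffunE eqxx expr1 big1 ?mulr1 // => y /negPf hy.
by rewrite ffunE hy expr0.
Qed.

Lemma polyfunX E f j : polyfun E f -> polyfun (j * E).+1 (fun z => f z ^+ j).
Proof.
move=> hf; elim: j => [|j IH].
  by apply: eq_polyfun polyfun1 => z; rewrite expr0.
apply: eq_polyfun (polyfun_widen _ (polyfunM IH hf)) => [z|].
  by rewrite exprSr.
by rewrite mulSn addSn addnC.
Qed.

Lemma polyfun_prod (I : Type) (s : seq I) (e : I -> nat) F :
  (forall i, polyfun (e i) (F i)) ->
  polyfun (\sum_(i <- s) e i).+1 (fun z => \prod_(i <- s) F i z).
Proof.
move=> hF; elim: s => [|i s IH].
  by rewrite big_nil; apply: eq_polyfun polyfun1 => z; rewrite big_nil.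
rewrite big_cons -addnS; apply: eq_polyfun (polyfunM (hF i) IH) => z.
by rewrite big_cons.
Qed.

End PolyFun.

Lemma polyfun_monomial_comp (R : comPzRingType) (X : finType) n e D
    (F : 'I_n -> (X -> R) -> R) (a : {ffun 'I_n -> 'I_D}) :
  (0 < D)%N -> (forall t, polyfun e (F t)) ->
  polyfun (D * (n * e + n + 1)) (fun z => monomial a (fun t => F t z)).
Proof.
move=> D0 hF; apply: polyfun_widen (polyfun_prod _ (fun t => polyfunX (a t) (hF t))).
have le_sum : (\sum_(t < n) (a t * e).+1 <= \sum_(t < n) (D * e).+1)%N.
  by apply: leq_sum => t _; rewrite ltnS leq_mul2r ltnW ?orbT.
rewrite sum_nat_const card_ord in le_sum.
by move: le_sum D0; set S := (\sum_(t < n) _)%N; nia.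
Qed.

Lemma kermx_neq0 (k : fieldType) p q (A : 'M[k]_(p, q)) : (q < p)%N ->
  exists2 w : 'rV_p, w != 0 & w *m A = 0.
Proof.
move=> lt_qp; have : kermx A != 0.
  by rewrite kermx_eq0 /row_free neq_ltn (leq_ltn_trans (rank_leq_col A)).
by case/rowV0Pn => w /sub_kermxP wA w0; exists w.
Qed.

Lemma row_full_mul (k : fieldType) p q s (A : 'M[k]_(p, q)) (B : 'M_(q, s)) :
  row_full A -> row_full B -> row_full (A *m B).
Proof.
move=> /row_fullP[A' A'A] /row_fullP[B' B'B]; apply/row_fullP.
by exists (B' *m A'); rewrite mulmxA -(mulmxA B') A'A mulmx1 B'B.
Qed.

Lemma polyfun_dependent (k : fieldType) (X A C : finType) E
    (G : C -> A -> (X -> k) -> k) :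
  (forall c a, polyfun E (G c a)) -> (#|C| * E ^ #|X| < #|A|)%N ->
  exists2 w : {ffun A -> k}, w != 0 & forall c z, \sum_a w a * G c a z = 0.
Proof.
move=> hG ltCA.
have /fin_all_exists[coef hcoef] : forall ca : C * A,
    exists coef : {ffun X -> 'I_E} -> k,
    forall z, G ca.1 ca.2 z = \sum_b coef b * monomial b z.
  by case=> c a; exact: hG.
pose B := {ffun X -> 'I_E}.
pose Mx : 'M[k]_(#|A|, #|{: C * B}|) :=
  \matrix_(i, j) coef ((enum_val j).1, enum_val i) (enum_val j).2.
have [|w w0 wMx] := kermx_neq0 Mx.
  by rewrite card_prod card_ffun !card_ord.
exists [ffun a => w 0 (enum_rank a)].
  apply: contraNneq w0 => /ffunP w0; apply/eqP/rowP => i.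
  by have := w0 (enum_val i); rewrite !ffunE enum_valK mxE.
move=> c z; under eq_bigr => a _ do rewrite ffunE (hcoef (c, a)) mulr_sumr.
rewrite exchange_big big1 //= => b _.
under eq_bigr => a _ do rewrite mulrA.
rewrite -mulr_suml.
suff -> : \sum_a w 0 (enum_rank a) * coef (c, a) b = 0 by rewrite mul0r.
have /rowP/(_ (enum_rank ((c, b) : C * B))) := wMx.
rewrite !mxE (reindex enum_rank) /=; last first.
  by exists enum_val => i; rewrite ?enum_valK ?enum_rankK.
by under eq_bigr => a _ do rewrite !mxE !enum_rankK.
Qed.

Lemma digits_inj D n (a b : 'I_n -> nat) :
  (forall i, a i < D)%N -> (forall i, b i < D)%N ->
  (\sum_(i < n) a i * D ^ i = \sum_(i < n) b i * D ^ i)%N -> a =1 b.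
Proof.
elim: n a b => [|n IH] a b ha hb; first by move=> _ [].
have shift (c : 'I_n.+1 -> nat) :
    (\sum_(i < n.+1) c i * D ^ i
     = (\sum_(i < n) c (lift ord0 i) * D ^ i) * D + c ord0)%N.
  rewrite big_ord_recl expn0 muln1 addnC big_distrl; congr (_ + _)%N.
  by apply: eq_bigr => i _; rewrite expnS mulnCA mulnC.
rewrite !shift => e.
have e0 : a ord0 = b ord0.
  by have := congr1 (modn^~ D) e; rewrite !modnMDl !modn_small.
have D0 : (0 < D)%N by apply: leq_ltn_trans (ha ord0).
have {}e := congr1 (divn^~ D) e.
rewrite /= !divnMDl // !divn_small // !addn0 in e.
move=> i; case: (unliftP ord0 i) => [j ->|->] //.
exact: (IH (a \o lift ord0) (b \o lift ord0) (fun=> ha _) (fun=> hb _) e).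
Qed.

Lemma exists_nonroot (R : idomainType) (q : {poly R}) :
  (forall s : seq R, exists x, x \notin s) -> q != 0 -> exists x, ~~ root q x.
Proof.
move=> R_infinite q0.
have [s [us ss]] : exists s : seq R, uniq s /\ size s = size q.
  elim: (size q) => [|m [s [us ss]]]; first by exists [::].
  by have [x xs] := R_infinite s; exists (x :: s); rewrite /= xs us ss.
have [rs|/allPn[x _ nr]] := boolP (all (root q) s); last by exists x.
by have := max_poly_roots q0 rs us; rewrite ss ltnn.
Qed.

Lemma closed_field_infinite (k : closedFieldType) (s : seq k) :
  exists x, x \notin s.
Proof.
pose q := \prod_(a <- s) ('X - a%:P).
have q0 : q != 0 by rewrite monic_neq0 ?monic_prod_XsubC.
have [x] : exists x, root (q * 'X - 1) x.
  apply/closed_rootP; rewrite size_polyDl size_mulX // ?eqSS ?size_poly_eq0 //.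
  by rewrite size_polyN size_poly1 ltnS size_poly_gt0.
rewrite /root !hornerE subr_eq0 => qx1; exists x.
apply: contraTN qx1 => xs; suff -> : q.[x] = 0 by rewrite mul0r eq_sym oner_eq0.
by apply/rootP; rewrite root_prod_XsubC.
Qed.

Section InfiniteField.
Variable k : fieldType.
Hypothesis k_infinite : forall s : seq k, exists x, x \notin s.

(* Kronecker substitution [u t := s ^+ D ^ t] turns a combination of monomials
   with exponents < [D] into a univariate polynomial without collisions. *)
Lemma monomial_combination_nonvanishing n D
    (w : {ffun {ffun 'I_n -> 'I_D} -> k}) :
  w != 0 -> exists u : 'I_n -> k, \sum_a w a * monomial a u != 0.
Proof.
move=> w0; pose kron (a : {ffun 'I_n -> 'I_D}) := (\sum_(t < n) a t * D ^ t)%N.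
have kron_inj : injective kron.
  move=> a b /digits_inj eq_ab; apply/ffunP => t; apply: val_inj.
  by apply: eq_ab => i; apply: ltn_ord.
have [a0 wa0] : exists a, w a != 0.
  apply/existsP; apply: contraNT w0 => /existsPn w0.
  by apply/eqP/ffunP => a; rewrite ffunE; apply/eqP/negbNE.
pose q : {poly k} := \sum_a w a *: 'X^(kron a).
have q0 : q != 0.
  apply: contraNneq wa0 => /(congr1 (fun p : {poly k} => p`_(kron a0))).
  rewrite coef0 coef_sumMXn (bigD1 a0) ?eqxx //= big1 ?addr0 => [/eqP//|a].
  by case/andP=> /eqP/kron_inj-> /negPf; rewrite eqxx.
have [s qs] := exists_nonroot k_infinite q0.
exists (fun t => s ^+ (D ^ t)); apply: contra qs => /eqP q_s.
apply/rootP; rewrite -{}q_s horner_sum; apply: eq_bigr => a _.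
rewrite hornerZ hornerXn -prodrXr; congr (_ * _).
by apply: eq_bigr => t _; rewrite -exprM mulnC.
Qed.

Lemma exists_vector_off_polyfun_images (X C : finType) n e
    (F : C -> (X -> k) -> 'rV[k]_n) :
  (#|X| < n)%N -> (forall c t, polyfun e (fun z => F c z 0 t)) ->
  exists u : 'rV_n, forall c z, F c z != u.
Proof.
move=> ltXn hF; pose K := (n * e + n + 1)%N; pose D := (#|C| * K ^ #|X|).+1.
have hG c (a : {ffun 'I_n -> 'I_D}) :
    polyfun (D * K) (fun z => monomial a (fun t => F c z 0 t)).
  by apply: polyfun_monomial_comp.
have ltCA : (#|C| * (D * K) ^ #|X| < #|{ffun 'I_n -> 'I_D}|)%N.
  rewrite card_ffun !card_ord expnMn mulnCA.
  apply: (@leq_trans (D * D ^ #|X|)).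
    by rewrite [(D * _)%N]mulnC ltn_pmul2l ?expn_gt0.
  by rewrite -expnS leq_pexp2l.
have [w w0 hw] := polyfun_dependent hG ltCA.
have [u hu] := monomial_combination_nonvanishing w0.
exists (\row_t u t) => c z; apply: contraNneq hu => Fcz.
apply/eqP; rewrite -[RHS](hw c z) Fcz; apply: eq_bigr => a _; congr (_ * _).
by apply: eq_bigr => t _; rewrite mxE.
Qed.

End InfiniteField.

Section Complement.
Variables (r d : nat) (f : 'I_d -> 'I_r) (j0 : 'I_r).
Hypothesis f_inj : injective f.

Definition compl_enum : 'I_(r - d) -> 'I_r :=
  fun b => nth j0 (enum (~: [set f a | a in 'I_d])) b.

Lemma big_split_inj (V : nmodType) (G : 'I_r -> V) :
  \sum_j G j = \sum_a G (f a) + \sum_b G (compl_enum b).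
Proof.
rewrite (bigID (mem [set f a | a in 'I_d])) /= big_imset //=; last first.
  by move=> a b _ _ /f_inj.
congr (_ + _); rewrite -big_set /= -big_enum (big_nth j0) -cardE big_mkord.
have -> : #|~: [set f a | a in 'I_d]| = (r - d)%N.
  by rewrite cardsCs setCK card_imset // !card_ord.
by apply: eq_bigr.
Qed.

End Complement.

Definition psi_sum (k : fieldType) r (N : krep k r) d (V : 'M[k]_(d, r))
    (x : 'I_d -> 'rV[k]_(dim1 N)) : 'rV[k]_(dim2 N) :=
  \sum_(l < d) psi_elem (row l V) (x l).
Arguments psi_sum {k r} N {d} V x.

Section Charts.
Variables (k : fieldType) (r d : nat) (N : krep k r).
Local Notation m := (dim1 N).
Local Notation n := (dim2 N).

Definition chart := ({ffun 'I_d -> 'I_r} * {ffun 'I_(r - d) -> 'I_r})%type.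
Definition chart_var := (('I_d * 'I_(r - d)) + ('I_d * 'I_m))%type.

Definition chart_Y (z : chart_var -> k) : 'M_(d, m) :=
  \matrix_(a, s) z (inr (a, s)).
Definition chart_B (z : chart_var -> k) : 'M_(r - d, d) :=
  \matrix_(b, a) z (inl (a, b)).

(* [psi_sum N V x] is psi applied to the r x m matrix [V^T X] of rank <= d;
   the chart [c] parametrises those such matrices whose rows [c.1] form [Y]
   and whose remaining rows [c.2] are [B *m Y]. *)
Definition chart_map (c : chart) (z : chart_var -> k) : 'rV_n :=
  \sum_a row a (chart_Y z) *m arr N (c.1 a)
  + \sum_b (row b (chart_B z) *m chart_Y z) *m arr N (c.2 b).

Lemma chart_map_polyfun c t : polyfun 4 (fun z => chart_map c z 0 t).
Proof.
have hY a s :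
    polyfun 4 (fun z : chart_var -> k => arr N (c.1 a) s t * z (inr (a, s))).
  by apply/polyfunMl/(polyfun_widen _ (polyfun_var _ _)).
have hBY b s : polyfun 4 (fun z : chart_var -> k => arr N (c.2 b) s t *
    \sum_a z (inl (a, b)) * z (inr (a, s))).
  apply/polyfunMl/polyfun_sum => a.
  exact: (polyfunM (polyfun_var k _) (polyfun_var k _)).
apply: eq_polyfun (polyfunD (polyfun_sum _ (fun a => polyfun_sum _ (hY a)))
                            (polyfun_sum _ (fun b => polyfun_sum _ (hBY b)))).
move=> z; rewrite mxE !summxE; congr (_ + _); apply: eq_bigr => i _;
  rewrite mxE; apply: eq_bigr => s _; rewrite !mxE mulrC //.
by congr (_ * _); apply: eq_bigr => a _; rewrite !mxE.
Qed.

Lemma chart_map0 c : chart_map c (fun _ => 0) = 0.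
Proof.
rewrite /chart_map; have -> : chart_Y (fun _ => 0) = 0.
  by apply/matrixP => a s; rewrite !mxE.
by rewrite !big1 ?addr0 // => i _; rewrite ?row0 ?mulmx0 mul0mx.
Qed.

Lemma psi_sum_chart (V : 'M_(d, r)) x : (0 < r)%N -> row_free V ->
  exists c z, psi_sum N V x = chart_map c z.
Proof.
move=> r0 freeV; have fullVT : row_full V^T by rewrite /row_full mxrank_tr.
pose f := fullrankfun fullVT; pose Q := rowsub f V^T.
pose g := compl_enum f (Ordinal r0).
pose W := V^T *m invmx Q; pose Y := Q *m \matrix_l x l.
have VTX : V^T *m \matrix_l x l = W *m Y.
  by rewrite mulmxA mulmxKV ?fullrowsub_unit.
have rowWf a : row (f a) W = row a 1%:M.
  by rewrite row_mul -(row_rowsub f) -row_mul mulmxV ?fullrowsub_unit.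
exists (f, [ffun b => g b]).
pose z v := match v with inl (a, b) => W (g b) a | inr (a, s) => Y a s end.
exists z; rewrite /chart_map.
have -> : chart_Y z = Y by apply/matrixP => a s; rewrite mxE.
have rowB b : row b (chart_B z) = row (g b) W.
  by apply/rowP => a; rewrite !mxE /z !mxE.
have -> : psi_sum N V x = \sum_j row j (W *m Y) *m arr N j.
  rewrite -VTX /psi_sum /psi_elem exchange_big; apply: eq_bigr => j _.
  rewrite row_mul (mulmx_sum_row (row j V^T)) mulmx_suml; apply: eq_bigr => l _.
  by rewrite -scalemxAl !mxE rowK.
rewrite (big_split_inj (Ordinal r0) (@fullrankfun_inj _ _ _ _ fullVT)).
congr (_ + _).
  by apply: eq_bigr => a _; rewrite row_mul -/f rowWf -row_mul mul1mx.
by apply: eq_bigr => b _; rewrite ffunE row_mul rowB.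
Qed.

End Charts.

Lemma exists_vector_off_psi_images (k : fieldType) r d (N : krep k r) :
  (forall s : seq k, exists x, x \notin s) -> (0 < r)%N ->
  (d * dim1 N + d * (r - d) < dim2 N)%N ->
  exists2 u, u != 0 &
    forall (V : 'M_(d, r)) x, row_free V -> psi_sum N V x != u.
Proof.
move=> k_infinite r0 lt_n.
have [|u off_u] :=
  exists_vector_off_polyfun_images k_infinite _ (@chart_map_polyfun k r d N).
  by rewrite card_sum !card_prod !card_ord addnC.
exists u.
  apply: contraNneq (off_u ([ffun=> Ordinal r0], [ffun=> Ordinal r0]) (fun=> 0)).
  by move=> ->; rewrite chart_map0.
by move=> V x freeV; have [c [z ->]] := psi_sum_chart x r0 freeV.
Qed.

(* [M / ker G] for a surjective [G] on the second vertex. *)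
Definition quot2 (k : fieldType) r (N : krep k r) n' (G : 'M[k]_(dim2 N, n')) :=
  @KRep k r (dim1 N) n' (fun i => arr N i *m G).
Arguments quot2 {k r} N {n'} G.

Lemma rep_projE (k : fieldType) r d (N : krep k r) : rep_proj d N <->
  forall V : 'M_(d, r), row_free V -> forall x, psi_sum N V x = 0 -> forall l, x l = 0.
Proof. by []. Qed.

Lemma psi_sum_quot2 (k : fieldType) r d (N : krep k r) n' (G : 'M_(dim2 N, n'))
    (V : 'M_(d, r)) x :
  psi_sum (quot2 N G) V x = psi_sum N V x *m G.
Proof.
rewrite /psi_sum /psi_elem mulmx_suml; apply: eq_bigr => l _.
by rewrite mulmx_suml; apply: eq_bigr => j _; rewrite -scalemxAl mulmxA.
Qed.

Section Quotient.
Variables (k : fieldType) (r d : nat) (N : krep k r).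

Lemma rep_proj_quot2_comp n1 n2 (G1 : 'M_(dim2 N, n1)) (G2 : 'M_(n1, n2)) :
  rep_proj d (quot2 (quot2 N G1) G2) -> rep_proj d (quot2 N (G1 *m G2)).
Proof.
move/rep_projE=> proj12; apply/rep_projE => V freeV x.
rewrite psi_sum_quot2 mulmxA -psi_sum_quot2.
by rewrite -(@psi_sum_quot2 _ _ _ (quot2 N G1) _ G2); exact: proj12.
Qed.

Lemma rep_proj_quot2_line (u : 'rV_(dim2 N)) : rep_proj d N ->
  (forall (V : 'M_(d, r)) x, row_free V -> psi_sum N V x != u) ->
  rep_proj d (quot2 N (col_base (cokermx u))).
Proof.
move/rep_projE=> projN off_u; apply/rep_projE => V freeV x.
rewrite psi_sum_quot2 => psiG0.
have : (psi_sum N V x <= u)%MS.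
  by rewrite submxE -(mulmx_base (cokermx u)) mulmxA psiG0 mul0mx.
case/submxP=> D; rewrite (mx11_scalar D) mul_scalar_mx => psi_u.
have [D0|nzD] := eqVneq (D 0 0) 0.
  by apply: (projN V freeV x); rewrite psi_u D0 scale0r.
(* Scaling [x] by [1/D] would put [u] itself in the image of [psi_sum] *)
have := off_u V (fun l => (D 0 0)^-1 *: x l) freeV.
suff -> : psi_sum N V (fun l => (D 0 0)^-1 *: x l) = u by rewrite eqxx.
rewrite -[u](scale1r) -(mulVf nzD) -scalerA -psi_u /psi_sum scaler_sumr.
apply: eq_bigr => l _; rewrite /psi_elem scaler_sumr; apply: eq_bigr => j _.
by rewrite -!scalemxAl !scalerA mulrC.
Qed.

End Quotient.

Section GenericQuotient.
Variables (k : fieldType) (r d : nat).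
Hypothesis k_infinite : forall s : seq k, exists x, x \notin s.
Hypothesis r_gt0 : (0 < r)%N.

Lemma exists_rep_proj_quot2_line (N : krep k r) : rep_proj d N ->
  (d * dim1 N + d * (r - d) < dim2 N)%N ->
  exists n' (G : 'M_(dim2 N, n')),
    [/\ row_full G, n'.+1 = dim2 N & rep_proj d (quot2 N G)].
Proof.
move=> projN lt_n.
have [u u0 off_u] := exists_vector_off_psi_images k_infinite r_gt0 lt_n.
exists _, (col_base (cokermx u)); split; first exact: col_base_full.
  by rewrite mxrank_coker rank_rV u0 subn1 prednK // (leq_ltn_trans _ lt_n).
exact: rep_proj_quot2_line.
Qed.

Lemma exists_rep_proj_quot2_min (N : krep k r) : rep_proj d N ->
  (d * dim1 N + d * (r - d) < dim2 N)%N ->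
  exists n' (G : 'M_(dim2 N, n')),
    [/\ row_full G, n' = (d * dim1 N + d * (r - d))%N & rep_proj d (quot2 N G)].
Proof.
move=> projN lt_n; have [t] : exists t, dim2 N = (d * dim1 N + d * (r - d) + t.+1)%N.
  by exists (dim2 N - (d * dim1 N + d * (r - d))).-1; lia.
elim: t N projN {lt_n} => [|t IH] N projN n_eq.
  have [|n' [G [fullG n'_eq projG]]] := exists_rep_proj_quot2_line projN.
    by rewrite n_eq addn1.
  by exists n', G; split=> //; apply/eq_add_S; rewrite n'_eq n_eq addn1.
have [|n1 [G1 [fullG1 n1_eq projG1]]] := exists_rep_proj_quot2_line projN.
  by rewrite n_eq; lia.
have [|n' [G2 [fullG2 n'_eq projG2]]] := IH _ projG1.
  by apply/eq_add_S; rewrite /= n1_eq n_eq addnS.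
exists n', (G1 *m G2); split=> //; last exact: rep_proj_quot2_comp.
exact: row_full_mul.
Qed.

End GenericQuotient.

Lemma ses_quot2 (k : fieldType) r (N : krep k r) n' (G : 'M_(dim2 N, n')) :
  row_full G -> ses (aP0 k r (\rank (kermx G))) N (quot2 N G).
Proof.
move=> fullG; exists 0, (row_base (kermx G)), 1%:M, G; split=> [i|i||].
- by rewrite !mul0mx.
- by rewrite mul1mx.
- split; first by rewrite /row_free -leqn0 rank_leq_row.
    by rewrite /row_full mxrank1.
  by rewrite (eqP (_ : kermx 1%:M == 0)) ?sub0mx ?kermx_eq0 ?row_free_unit ?unitmx1.
- by split; [exact: row_base_free | exact: fullG | apply/eqmxP; exact: eq_row_base].
Qed.

Theorem proposition2p3p5 (k : closedFieldType) (r d : nat) (M : krep k r) :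
  (2 <= r)%N -> (1 <= d)%N -> (d <= r - 1)%N ->
  rep_proj d M ->
  Delta M d > (d * (r - d))%:Z ->
  exists (a : nat) (Mmin : krep k r),
    [/\ (0 < a)%N, ses (aP0 k r a) M Mmin, rep_proj d Mmin &
        Delta Mmin d = (d * (r - d))%:Z].
Proof.
(* The argument needs no bounds on [d]. *)
move=> r_ge2 _ _ projM; rewrite /Delta ltrBrDr -PoszD ltz_nat addnC => lt_n.
have r_gt0 : (0 < r)%N by apply: leq_trans r_ge2.
have [n' [G [fullG n'_eq projG]]] :=
  exists_rep_proj_quot2_min (@closed_field_infinite k) r_gt0 projM lt_n.
exists (\rank (kermx G)), (quot2 M G); split=> //.
- by rewrite mxrank_ker (eqP fullG) subn_gt0 n'_eq.
- exact: ses_quot2.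
- by rewrite /Delta /= n'_eq PoszD addrC addKr.
Qed.
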